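(* Let $n\geqslant 1$ and $m\geqslant 0$ be integers, and let $$P(x_1,\ldots,x_n)=\sum_{\substack{j_1,\ldots,j_n\geqslant 0\\ j_1+\cdots+j_n=m}} c_{j_1,\ldots,j_n}x_1^{j_1}\cdots x_n^{j_n}\in\mathbb{C}[x_1,\ldots,x_n]$$ and $$P^*(x_1,\ldots,x_n)=\sum_{\substack{j_1,\ldots,j_n\geqslant 0\\ j_1+\cdots+j_n=m}} c_{j_1,\ldots,j_n}(x_1)_{j_1}\cdots(x_n)_{j_n}.$$ Suppose $P\neq 0$ and $\deg P\leqslant k_1+\cdots+k_n$ where $k_1,\ldots,k_n$ are nonnegative integers. Then the coefficient of $x_1^{k_1}\cdots x_n^{k_n}$ in $$P(x_1,\ldots,x_n)(x_1+\cdots+x_n)^{k_1+\cdots+k_n-\deg P}$$ equals $$\frac{\left(\sum_{i=1}^n k_i-\deg P\right)!}{k_1!\cdots k_n!}\,P^*(k_1,\ldots,k_n).$$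
   Context: $(x)_0=1$ and $(x)_r=x(x-1)\cdots(x-r+1)$ for positive integers $r$ (falling factorial). *)

From HB Require Import structures.
From mathcomp Require Import all_boot all_order all_algebra.
From mathcomp Require Import mpoly.
From mathcomp.real_closed Require Import complex.
From mathcomp.reals_stdlib Require Import Rstruct.
Set Implicit Arguments. Unset Strict Implicit. Unset Printing Implicit Defensive.
Import Order.TTheory GRing.Theory Num.Theory.
Local Open Scope ring_scope.

Definition CC : Type := complex Rdefinitions.R.

Definition ffX {R : comRingType} {n : nat} (l : 'I_n) (r : nat) : {mpoly R[n]} :=
  \prod_(i < r) ('X_l - (i%:R)%:MP).

Definition Ppoly {R : comRingType} (n m : nat) (c : 'X_{1..n < m.+1} -> R)
  : {mpoly R[n]} :=
  \sum_(j : 'X_{1..n < m.+1} | mdeg j == m) c j *: 'X_[j].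

Definition Pstar {R : comRingType} (n m : nat) (c : 'X_{1..n < m.+1} -> R)
  : {mpoly R[n]} :=
  \sum_(j : 'X_{1..n < m.+1} | mdeg j == m) c j *: \prod_(l < n) ffX l (j l).

Definition tdeg {R : ringType} {n : nat} (p : {mpoly R[n]}) : nat := (msize p).-1.

From HB Require Import structures.
From mathcomp Require Import all_boot all_order all_algebra.
From mathcomp Require Import mpoly.
From mathcomp Require Import ring.
From mathcomp.real_closed Require Import complex.
From mathcomp.reals_stdlib Require Import Rstruct.
Import Order.TTheory GRing.Theory Num.Theory.
Local Open Scope ring_scope.

(* P is homogeneous of degree m, so both sides are linear in c and it suffices
   to treat a monomial x^j with |j| = m.  The coefficient of x^k in
   x^j (x_1 + ... + x_n)^d is the multinomial coefficient d!/prod_i (k_i - j_i)!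
   when j <= k and 0 otherwise; since k_i!/(k_i - j_i)! = (k_i)_(j_i), and
   (k_i)_(j_i) = 0 as soon as j_i > k_i, both cases give
   d!/prod_i k_i! * prod_i (k_i)_(j_i). *)

Lemma prod_fact_ffact {n} {j k : 'X_{1..n}} : (j <= k)%MM ->
  (\prod_(l < n) (k l)`! =
     (\prod_(l < n) (k l) ^_ (j l)) * \prod_(l < n) ((k - j)%MM l)`!)%N.
Proof.
move=> /mnm_lepP le_jk; rewrite -big_split /=.
by apply: eq_bigr => l _; rewrite mnmBE ffact_fact.
Qed.

Lemma prod_ffact_eq0 {n} {j k : 'X_{1..n}} : ~~ (j <= k)%MM ->
  (\prod_(l < n) (k l) ^_ (j l) = 0)%N.
Proof.
move=> nle_jk; apply/eqP; apply: contraNT nle_jk => nz_prod.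
apply/mnm_lepP => l; rewrite leqNgt; apply: contra nz_prod => lt_kj.
by rewrite (bigD1 l) //= ffact_small.
Qed.

Lemma prod_ffact_U {n} (i : 'I_n) (k : 'X_{1..n}) :
  (\prod_(l < n) (k l) ^_ (U_(i)%MM l) = k i)%N.
Proof.
rewrite (bigD1 i) //= mnm1E eqxx ffactn1 big1 ?muln1 // => l ne_li.
by rewrite mnm1E eq_sym (negbTE ne_li).
Qed.

Lemma mcoeffMXE {R : comNzRingType} {n} (p : {mpoly R[n]}) (m k : 'X_{1..n}) :
  (p * 'X_[m])@_k = if (m <= k)%MM then p@_(k - m)%MM else 0.
Proof.
case: ifP => [le_mk | nle_mk]; first by rewrite -{1}(submK le_mk) addmC mcoeffMX.
apply/eqP; rewrite mcoeff_eq0 (perm_mem (msuppMX p m)).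
by apply/mapP => -[m' _ km]; move: nle_mk; rewrite km lem_addr.
Qed.

Lemma multinomial_mcoeff {R : comNzRingType} {n} (e : 'X_{1..n}) :
  ((\sum_(i < n) 'X_i : {mpoly R[n]}) ^+ mdeg e)@_e * (\prod_(i < n) (e i)`!)%:R
  = (mdeg e)`!%:R.
Proof.
move de: (mdeg e) => d; elim: d e de => [|d IH] e de.
  have /eqP -> : e == 0%MM by rewrite -mdeg_eq0 de.
  by rewrite expr0 mcoeff1 eqxx mul1r big1 // => i _; rewrite mnm0E.
rewrite exprSr mulr_sumr raddf_sum mulr_suml /= factS natrM -de mdegE natr_sum.
rewrite mulr_suml; apply: eq_bigr => i _.
rewrite mcoeffMXE lep1mP; case: eqP => [-> | /eqP nz_ei]; first by rewrite !mul0r.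
have le_Ue : (U_(i) <= e)%MM by rewrite lep1mP.
have deU : mdeg (e - U_(i))%MM = d.
  by apply/eqP; rewrite -(eqn_add2r 1) -(mdeg1 i) -mdegD submK // de mdeg1 addn1.
rewrite -(IH _ deU) (prod_fact_ffact le_Ue) prod_ffact_U natrM.
by rewrite mulrCA mulrC.
Qed.

Lemma mcoeff_X_sumX_exp {R : numFieldType} {n} (j k : 'X_{1..n}) :
  ('X_[j] * (\sum_(i < n) 'X_i : {mpoly R[n]}) ^+ (mdeg k - mdeg j))@_k =
  (mdeg k - mdeg j)`!%:R / (\prod_(i < n) (k i)`!)%:R
    * (\prod_(i < n) (k i) ^_ (j i))%:R.
Proof.
rewrite mulrC mcoeffMXE; case: ifP => [le_jk | /negbT nle_jk]; last first.
  by rewrite prod_ffact_eq0 // mulr0.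
have -> : (mdeg k - mdeg j = mdeg (k - j))%N.
  by rewrite -{1}(submK le_jk) mdegD addnK.
rewrite -multinomial_mcoeff (prod_fact_ffact le_jk) natrM.
have fact_neq0 (f : 'I_n -> nat) : (\prod_(i < n) (f i)`!)%:R != 0 :> R.
  by rewrite pnatr_eq0 -lt0n prodn_gt0 // => i; rewrite fact_gt0.
have ffact_neq0 : (\prod_(i < n) (k i) ^_ (j i))%:R != 0 :> R.
  move: (fact_neq0 k); rewrite (prod_fact_ffact le_jk) natrM.
  by rewrite mulf_eq0 negb_or => /andP[].
by field; rewrite ffact_neq0 fact_neq0.
Qed.

Lemma meval_ffX {R : comNzRingType} {n} (l : 'I_n) (r : nat) (v : 'I_n -> nat) :
  (ffX l r : {mpoly R[n]}).@[fun i => (v i)%:R] = ((v l) ^_ r)%:R.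
Proof.
elim: r => [|r IH]; first by rewrite /ffX big_ord0 meval1 ffactn0.
rewrite /ffX big_ord_recr /= mevalM -/(ffX l r) IH mevalB mevalXU mevalC.
rewrite ffactnSr natrM; case: (leqP r (v l)) => [le_rv | lt_vr].
  by rewrite natrB.
by rewrite ffact_small // !mul0r.
Qed.

Lemma tdeg_dhomog {R : comNzRingType} {n d} {p : {mpoly R[n]}} :
  p != 0 -> p \is d.-homog -> tdeg p = d.
Proof. by move=> nz_p hom_p; apply: dhomog_uniq nz_p (dhomog_msize hom_p) hom_p. Qed.

Lemma Ppoly_dhomog {R : comNzRingType} {n m} (c : 'X_{1..n < m.+1} -> R) :
  Ppoly c \is m.-homog.
Proof.
apply: rpred_sum => j /eqP deg_j; apply: dhomogZ.
by rewrite dhomogX; apply/eqP.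
Qed.

Theorem lemma2p1 (n m : nat) (c : 'X_{1..n < m.+1} -> CC) (k : 'X_{1..n}) :
  (1 <= n)%N ->
  Ppoly c != 0 ->
  (tdeg (Ppoly c) <= mdeg k)%N ->
  (Ppoly c * (\sum_(i < n) 'X_i) ^+ (mdeg k - tdeg (Ppoly c))%N)@_k =
    ((mdeg k - tdeg (Ppoly c))`!)%:R / (\prod_(i < n) (k i)`!)%:R
      * (Pstar c).@[fun i => (k i)%:R].
Proof.
move=> _ nz_P _; rewrite (tdeg_dhomog nz_P (Ppoly_dhomog c)).
rewrite /Ppoly /Pstar mulr_suml !raddf_sum mulr_sumr /=.
apply: eq_bigr => j /eqP deg_j.
have -> : (mdeg k - m = mdeg k - mdeg j)%N by rewrite deg_j.
rewrite -scalerAl mcoeffZ mcoeff_X_sumX_exp mevalZ.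
rewrite (big_morph _ (mevalM _) (meval1 _)) mulrCA; congr (_ * (_ * _)).
by rewrite natr_prod; apply: eq_bigr => l _; rewrite (meval_ffX (R := CC)).
Qed.
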